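(* Let $u_0\in C(\mathbb{R})$ satisfy $u_0(x)>0$ for all $x\in\mathbb{R}$, $\liminf_{x\to-\infty}u_0(x)>0$, $u_0(x)\to0$ as $x\to+\infty$, and suppose there is a constant $\xi_0$ such that $u_0\in C^2([\xi_0,+\infty))$, $u_0'\le0$ on $[\xi_0,+\infty)$, and $u_0''(x)/u_0(x)\to0$ as $x\to+\infty$. Then: (i) $u_0'(x)/u_0(x)\to0$ as $x\to+\infty$; (ii) for every $\kappa>0$ there exists $x_\kappa$ such that $u_0(x)\ge e^{-\kappa x}$ for all $x\in[x_\kappa,+\infty)$; (iii) for any $\gamma_1>0$, $\gamma_2>0$ and $\rho_1>\rho_2>0$, if functions $y_1(t)$, $y_2(t)$ satisfy $u_0(y_1(t))=\gamma_1e^{-\rho_1t}$ and $u_0(y_2(t))=\gamma_2e^{-\rho_2t}$ for all $t>0$ large enough, then $\lim_{t\to+\infty}(y_1(t)-y_2(t))=+\infty$. *)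

From Stdlib Require Import Reals.
From Coquelicot Require Import Coquelicot.
Open Scope R_scope.

Definition has_deriv_on_ge (a : R) (f f' : R -> R) : Prop :=
  forall x, a <= x ->
    filterlim (fun h => (f (x + h) - f x) / h)
      (within (fun h => h <> 0 /\ a <= x + h) (locally 0))
      (locally (f' x)).

Definition cont_on_ge (a : R) (f : R -> R) : Prop :=
  forall x, a <= x ->
    filterlim f (within (fun y => a <= y) (locally x)) (locally (f x)).

Definition C2_on_ge (a : R) (f f1 f2 : R -> R) : Prop :=
  has_deriv_on_ge a f f1 /\ has_deriv_on_ge a f1 f2 /\ cont_on_ge a f2.

(* Since u0'' <= e u0 eventually and u0 is nonincreasing, Taylor's formula on
   [x, x + h] gives 0 < u0(x + h) <= u0(x) (1 + h u0'(x)/u0(x) + e h^2/2), so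
   |u0'/u0| <= 1/h + e h/2, which is small for h = 2/d and e = d^2/4.  Hence
   ln u0 has derivative tending to 0, and ln u0(x) + eps x is eventually
   nondecreasing for every eps > 0.  This gives (ii) at once.  For (iii),
   positivity, continuity and the liminf at -oo bound u0 below on every
   (-oo, X], which pushes y1(t), y2(t) to the right of X; there y2 <= y1 by
   monotonicity, and with eps = 1,
   y1 - y2 >= ln u0(y2) - ln u0(y1) = ln(g2/g1) + (r1 - r2) t. *)

From Stdlib Require Import Reals Lra.
From Coquelicot Require Import Coquelicot.
Open Scope R_scope.

Lemma is_derive_of_has_deriv_on_ge (a : R) (f f' : R -> R) (x : R) :
  has_deriv_on_ge a f f' -> a < x -> is_derive f x (f' x).
Proof.
intros Hf Hx. apply is_derive_Reals. intros eps Heps.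
destruct (Hf x (Rlt_le _ _ Hx) _ (locally_ball (f' x) (mkposreal eps Heps))) as [d Hd].
assert (Hdelta : 0 < Rmin d (x - a)) by (apply Rmin_pos; [apply cond_pos | lra]).
exists (mkposreal _ Hdelta). intros h Hh0 Hh. simpl in Hh.
assert (Hhd : Rabs h < d) by (eapply Rlt_le_trans; [exact Hh | apply Rmin_l]).
assert (Hha : Rabs h < x - a) by (eapply Rlt_le_trans; [exact Hh | apply Rmin_r]).
apply Rabs_def2 in Hha.
apply (Hd h); [change (Rabs (h - 0) < d); now rewrite Rminus_0_r | split; [exact Hh0 | lra]].
Qed.

Lemma le_of_is_derive_nonneg (f df : R -> R) (p q : R) :
  p <= q -> (forall y, p <= y <= q -> is_derive f y (df y) /\ 0 <= df y) ->
  f p <= f q.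
Proof.
intros Hpq Hf.
destruct (MVT_gen f p q df) as [c [Hc Hmvt]];
  rewrite ?Rmin_left, ?Rmax_right in * by lra.
- intros y Hy. apply Hf. lra.
- intros y Hy.
  apply continuity_pt_filterlim, (@ex_derive_continuous R_AbsRing R_NormedModule).
  exists (df y). apply Hf. exact Hy.
- assert (0 <= df c * (q - p)) by (apply Rmult_le_pos; [apply Hf, Hc | lra]). lra.
Qed.

Lemma taylor2_le (f f1 f2 : R -> R) (x h B : R) :
  0 <= h ->
  (forall z, x <= z <= x + h ->
     is_derive f z (f1 z) /\ is_derive f1 z (f2 z) /\ f2 z <= B) ->
  f (x + h) <= f x + h * f1 x + h ^ 2 / 2 * B.
Proof.
intros Hh Hf.
assert (Hf1 : forall z, x <= z <= x + h -> f1 z <= f1 x + (z - x) * B).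
{ intros z Hz.
  enough ((x - x) * B - f1 x <= (z - x) * B - f1 z) by lra.
  apply (le_of_is_derive_nonneg (fun y => (y - x) * B - f1 y) (fun y => B - f2 y));
    [lra |].
  intros y Hy. destruct (Hf y ltac:(lra)) as (_ & Hd1 & HB). split; [| lra].
  auto_derive; [exists (f2 y); exact Hd1 |].
  replace (Derive (fun t => f1 t) y) with (f2 y) by (symmetry; now apply is_derive_unique).
  ring. }
enough (f x + (x - x) * f1 x + (x - x) ^ 2 / 2 * B - f x
        <= f x + h * f1 x + h ^ 2 / 2 * B - f (x + h)) by lra.
replace h with (x + h - x) at 1 2 by ring.
apply (le_of_is_derive_nonneg (fun y => f x + (y - x) * f1 x + (y - x) ^ 2 / 2 * B - f y)
         (fun y => f1 x + (y - x) * B - f1 y)); [lra |].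
intros y Hy. destruct (Hf y Hy) as (Hd0 & _ & _). split; [| specialize (Hf1 y Hy); lra].
auto_derive; [exists (f1 y); exact Hd0 |].
replace (Derive (fun t => f t) y) with (f1 y) by (symmetry; now apply is_derive_unique).
field.
Qed.

Lemma neg_logderiv_lt (f f1 f2 : R -> R) (x h e : R) :
  0 < h -> 0 < f x -> 0 < f (x + h) ->
  (forall z, x <= z <= x + h ->
     is_derive f z (f1 z) /\ is_derive f1 z (f2 z) /\ f2 z <= e * f x) ->
  - (f1 x / f x) < / h + h * e / 2.
Proof.
intros Hh Hx Hxh Hf.
pose proof (taylor2_le f f1 f2 x h (e * f x) (Rlt_le _ _ Hh) Hf) as Htaylor.
replace (f1 x) with (f1 x / f x * f x) in Htaylor by (field; lra).
set (r := f1 x / f x) in *.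
assert (Hpos : 0 < 1 + h * r + h ^ 2 / 2 * e) by nra.
apply (Rmult_lt_reg_l h); [exact Hh |].
replace (h * (/ h + h * e / 2)) with (1 + h ^ 2 / 2 * e) by (field; lra).
lra.
Qed.

Definition subexponential (f : R -> R) : Prop :=
  forall eps, 0 < eps -> exists X, forall p q, X <= p -> p <= q ->
    ln (f p) + eps * p <= ln (f q) + eps * q.

Section LogDerivative.

Variables (f f1 : R -> R) (a : R).
Hypothesis f_pos : forall x, 0 < f x.
Hypothesis f_derive : forall x, a < x -> is_derive f x (f1 x).

Lemma nonincreasing_of_derive_nonpos :
  (forall x, a <= x -> f1 x <= 0) -> forall p q, a < p -> p <= q -> f q <= f p.
Proof.
intros f1_nonpos p q Hp Hpq.
enough (- f p <= - f q) by lra.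
apply (le_of_is_derive_nonneg (fun y => - f y) (fun y => - f1 y)); [exact Hpq |].
intros y Hy. split.
- assert (Hd := f_derive y ltac:(lra)).
  auto_derive; [exists (f1 y); exact Hd |].
  replace (Derive (fun t => f t) y) with (f1 y) by (symmetry; now apply is_derive_unique).
  ring.
- assert (f1 y <= 0) by (apply f1_nonpos; lra). lra.
Qed.

Lemma is_lim_logderiv_0 (f2 : R -> R) :
  (forall x, a < x -> is_derive f1 x (f2 x)) ->
  (forall x, a <= x -> f1 x <= 0) ->
  is_lim (fun x => f2 x / f x) p_infty 0 ->
  is_lim (fun x => f1 x / f x) p_infty 0.
Proof.
intros f1_derive f1_nonpos Hlim2.
apply is_lim_spec. apply is_lim_spec in Hlim2. intros [d Hd]. simpl.
set (e := d ^ 2 / 4).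
assert (He : 0 < e) by (unfold e; nra).
destruct (Hlim2 (mkposreal e He)) as [X HX]. simpl in HX.
exists (Rmax X a). intros x Hx. apply Rmax_Rlt in Hx as [HXx Hax].
assert (Hf2 : forall z, x <= z -> f2 z <= e * f x).
{ intros z Hz.
  assert (Hratio : f2 z / f z < e).
  { pose proof (HX z ltac:(lra)) as Hz'. apply Rabs_def2 in Hz'. lra. }
  apply (Rlt_div_l _ _ _ (f_pos z)) in Hratio.
  pose proof (nonincreasing_of_derive_nonpos f1_nonpos x z Hax Hz). nra. }
assert (Hbound : - (f1 x / f x) < / (2 / d) + 2 / d * e / 2).
{ apply (neg_logderiv_lt f f1 f2); auto.
  - apply Rdiv_lt_0_compat; lra.
  - intros z Hz. split; [| split]; [apply f_derive | apply f1_derive | apply Hf2]; lra. }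
replace (/ (2 / d) + 2 / d * e / 2) with (3 * d / 4) in Hbound by (unfold e; field; lra).
assert (Hnonpos : f1 x / f x <= 0).
{ apply (Rle_div_l _ _ _ (f_pos x)). rewrite Rmult_0_l. apply f1_nonpos. lra. }
rewrite Rminus_0_r, Rabs_left1 by exact Hnonpos. lra.
Qed.

Lemma subexponential_of_logderiv_0 :
  is_lim (fun x => f1 x / f x) p_infty 0 -> subexponential f.
Proof.
intros Hlim eps Heps. apply is_lim_spec in Hlim.
destruct (Hlim (mkposreal eps Heps)) as [X HX]. simpl in HX.
exists (Rmax X a + 1). intros p q Hp Hpq.
pose proof (Rmax_l X a). pose proof (Rmax_r X a).
apply (le_of_is_derive_nonneg (fun y => ln (f y) + eps * y) (fun y => f1 y / f y + eps));
  [exact Hpq |].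
intros y Hy. split.
- assert (Hd := f_derive y ltac:(lra)). pose proof (f_pos y).
  auto_derive; [split; [exists (f1 y); exact Hd | lra] |].
  replace (Derive (fun t => f t) y) with (f1 y) by (symmetry; now apply is_derive_unique).
  field. lra.
- pose proof (HX y ltac:(lra)) as Hy'. apply Rabs_def2 in Hy'. lra.
Qed.

End LogDerivative.

Lemma subexponential_exp_le (f : R -> R) :
  (forall x, 0 < f x) -> subexponential f ->
  forall k, 0 < k -> exists xk, forall x, xk <= x -> exp (- k * x) <= f x.
Proof.
intros f_pos f_sub k Hk.
destruct (f_sub (k / 2) ltac:(lra)) as [X HX].
set (C := ln (f X) + k / 2 * X).
exists (Rmax X (- 2 * C / k) + 1). intros x Hx.
pose proof (Rmax_l X (- 2 * C / k)). pose proof (Rmax_r X (- 2 * C / k)).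
pose proof (HX X x (Rle_refl X) ltac:(lra)) as HC. fold C in HC.
assert (HCx : - 2 * C < x * k) by (apply (Rlt_div_l _ _ _ Hk); lra).
rewrite <- (exp_ln (f x)) by apply f_pos.
apply Rlt_le, exp_increasing. lra.
Qed.

Lemma bounded_below_on_left (f : R -> R) :
  (forall x, continuous f x) -> (forall x, 0 < f x) ->
  (exists c, 0 < c /\ exists M, forall x, x <= M -> c <= f x) ->
  forall X, exists m, 0 < m /\ forall y, y <= X -> m <= f y.
Proof.
intros f_cont f_pos [c [Hc [M HM]]] X.
destruct (continuity_ab_min f (Rmin M X) X) as [z [Hz _]].
- apply Rmin_r.
- intros y _. apply continuity_pt_filterlim, f_cont.
- exists (Rmin c (f z)). split; [now apply Rmin_pos |].
  intros y Hy. destruct (Rle_lt_dec y M).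
  + eapply Rle_trans; [apply Rmin_l | now apply HM].
  + eapply Rle_trans; [apply Rmin_r | apply Hz; split; [| exact Hy]].
    pose proof (Rmin_l M X). lra.
Qed.

Lemma is_lim_affine_p_infty (b s : R) :
  0 < s -> is_lim (fun t => b + s * t) p_infty p_infty.
Proof.
intros Hs. apply is_lim_spec. intros M. exists ((M - b) / s). intros t Ht.
apply (Rlt_div_l _ _ _ Hs) in Ht. lra.
Qed.

Lemma level_sets_diverge (f : R -> R) (a g1 g2 r1 r2 : R) (y1 y2 : R -> R) :
  (forall x, 0 < f x) ->
  (forall p q, a < p -> p <= q -> f q <= f p) ->
  subexponential f ->
  (forall X, exists m, 0 < m /\ forall y, y <= X -> m <= f y) ->
  0 < g1 -> 0 < g2 -> 0 < r2 -> r2 < r1 ->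
  (exists T, forall t, T < t ->
     f (y1 t) = g1 * exp (- r1 * t) /\ f (y2 t) = g2 * exp (- r2 * t)) ->
  is_lim (fun t => y1 t - y2 t) p_infty p_infty.
Proof.
intros f_pos f_noninc f_sub f_bdd Hg1 Hg2 Hr2 Hr12 Hlevels.
destruct (f_sub 1 Rlt_0_1) as [X0 HX0].
set (X := Rmax X0 (a + 1)).
assert (HX0X : X0 <= X) by apply Rmax_l.
assert (HaX : a < X) by (pose proof (Rmax_r X0 (a + 1)); unfold X; lra).
destruct (f_bdd X) as [m [Hm HmX]].
assert (Hright : forall g r, 0 < g -> 0 < r ->
          Rbar_locally p_infty (fun t => forall y, f y = g * exp (- r * t) -> X < y)).
{ intros g r Hg Hr.
  destruct (proj2 (is_lim_spec _ _ _) (is_lim_affine_p_infty 0 r Hr) (ln g - ln m)) as [T HT].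
  exists T. intros t Ht y Hy. destruct (Rle_lt_dec y X) as [HyX | HyX]; [exfalso | exact HyX].
  pose proof (ln_le _ _ Hm (HmX y HyX)) as Hln.
  rewrite Hy, ln_mult, ln_exp in Hln by (apply exp_pos || exact Hg).
  specialize (HT t Ht). lra. }
set (D t := ln g2 - ln g1 + (r1 - r2) * t).
assert (HD : is_lim D p_infty p_infty) by (apply is_lim_affine_p_infty; lra).
apply (is_lim_le_p_loc D); [| exact HD].
change (Rbar_locally p_infty (fun t => D t <= y1 t - y2 t)).
assert (HDpos : Rbar_locally p_infty (fun t => 0 < D t))
  by exact (proj2 (is_lim_spec _ _ _) HD 0).
pose (near_infty := Rbar_locally p_infty).
generalize (@filter_and _ near_infty _ _ _ Hlevels
  (@filter_and _ near_infty _ _ _ (Hright g1 r1 Hg1 ltac:(lra))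
     (@filter_and _ near_infty _ _ _ (Hright g2 r2 Hg2 Hr2) HDpos))).
apply filter_imp. intros t [[E1 E2] [R1 [R2 HDt]]].
pose proof (R1 _ E1) as Hy1. pose proof (R2 _ E2) as Hy2.
assert (HlnD : ln (f (y2 t)) - ln (f (y1 t)) = D t).
{ rewrite E1, E2, !ln_mult, !ln_exp by (apply exp_pos || assumption). unfold D. ring. }
assert (Hle : y2 t <= y1 t).
{ destruct (Rle_lt_dec (y2 t) (y1 t)) as [Hle | Hlt]; [exact Hle | exfalso].
  pose proof (ln_le _ _ (f_pos _) (f_noninc (y1 t) (y2 t) ltac:(lra) (Rlt_le _ _ Hlt))).
  lra. }
pose proof (HX0 (y2 t) (y1 t) ltac:(lra) Hle). lra.
Qed.

Theorem lemma2p3 (u0 u1 u2 : R -> R) (xi0 : R) :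
  (forall x, continuous u0 x) ->
  (forall x, 0 < u0 x) ->
  (* liminf_{x -> -oo} u0 x > 0 *)
  (exists c, 0 < c /\ exists M, forall x, x <= M -> c <= u0 x) ->
  is_lim u0 p_infty 0 ->
  (* u0 in C^2([xi0,+oo)) with u0' = u1, u0'' = u2 on [xi0,+oo) *)
  C2_on_ge xi0 u0 u1 u2 ->
  (forall x, xi0 <= x -> u1 x <= 0) ->
  is_lim (fun x => u2 x / u0 x) p_infty 0 ->
  (* (i) *)
  is_lim (fun x => u1 x / u0 x) p_infty 0 /\
  (* (ii) *)
  (forall kappa, 0 < kappa ->
     exists xk, forall x, xk <= x -> exp (- kappa * x) <= u0 x) /\
  (* (iii) *)
  (forall (g1 g2 r1 r2 : R) (y1 y2 : R -> R),
     0 < g1 -> 0 < g2 -> 0 < r2 -> r2 < r1 ->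
     (exists T, forall t, T < t ->
        u0 (y1 t) = g1 * exp (- r1 * t) /\ u0 (y2 t) = g2 * exp (- r2 * t)) ->
     is_lim (fun t => y1 t - y2 t) p_infty p_infty).
Proof.
intros u0_cont u0_pos u0_left _ [u0_deriv [u1_deriv _]] u1_nonpos Hlim2.
assert (D0 : forall x, xi0 < x -> is_derive u0 x (u1 x))
  by (intros; now apply (is_derive_of_has_deriv_on_ge xi0)).
assert (D1 : forall x, xi0 < x -> is_derive u1 x (u2 x))
  by (intros; now apply (is_derive_of_has_deriv_on_ge xi0)).
assert (Hi : is_lim (fun x => u1 x / u0 x) p_infty 0)
  by exact (is_lim_logderiv_0 u0 u1 xi0 u0_pos D0 u2 D1 u1_nonpos Hlim2).
pose proof (subexponential_of_logderiv_0 u0 u1 xi0 u0_pos D0 Hi) as Hsub.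
split; [exact Hi | split].
- exact (subexponential_exp_le u0 u0_pos Hsub).
- intros g1 g2 r1 r2 y1 y2.
  apply (level_sets_diverge u0 xi0); try assumption.
  + exact (nonincreasing_of_derive_nonpos u0 u1 xi0 D0 u1_nonpos).
  + exact (bounded_below_on_left u0 u0_cont u0_pos u0_left).
Qed.
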